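(* Let $n\geq 4$ and let $H$ be a Hamiltonian cycle in the complete bipartite graph $K_{n,n}$. Then $G=K_{n,n}-H$ (the graph on $V(K_{n,n})$ with edge set $E(K_{n,n})\setminus E(H)$) is $2$-swappable.
   Context: For a graph $G$, $A\subseteq E(G)$ and $B\subseteq E(\bar G)$ (edges of the complement of $G$ in the complete graph on $V(G)$), $G-A+B$ denotes the graph on $V(G)$ with edge set $(E(G)\setminus A)\cup B$. $G$ is $2$-swappable if for every $e\in E(G)$ there exist $A\subseteq E(G)$ and $B\subseteq E(\bar G)$ with $e\in A$, $|A|\leq 2$, and $G\cong G-A+B$. *)

(* Graphs are represented by their edge sets:
   an edge is a 2-element subset of the finite vertex type T. *)
From mathcomp Require Import all_boot all_fingroup.
Set Implicit Arguments. Unset Strict Implicit. Unset Printing Implicit Defensive.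

Section Graphs.
Variable T : finType.

Definition compl_edges (E : {set {set T}}) : {set {set T}} :=
  [set e : {set T} | (#|e| == 2) && (e \notin E)].

Definition swap_edges (E A B : {set {set T}}) : {set {set T}} :=
  (E :\: A) :|: B.

Definition graph_iso (E1 E2 : {set {set T}}) : Prop :=
  exists p : {perm T}, E2 = (fun e : {set T} => p @: e) @: E1.

Definition two_swappable (E : {set {set T}}) : Prop :=
  forall e, e \in E ->
    exists A B : {set {set T}},
      [/\ A \subset E, B \subset compl_edges E, e \in A, #|A| <= 2
        & graph_iso E (swap_edges E A B)].
End Graphs.

Definition Knn_vertex (n : nat) : finType := ('I_n + 'I_n)%type.

Definition Knn (n : nat) : {set {set Knn_vertex n}} :=
  [set [set (inl i : Knn_vertex n); inr j] | i : 'I_n, j : 'I_n].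

Definition hamiltonian_cycle (T : finType) (E H : {set {set T}}) : Prop :=
  exists s : seq T,
    [/\ uniq s, (forall x : T, x \in s), 3 <= size s,
        H = [set [set x; next s x] | x in s]
      & H \subset E].

From mathcomp Require Import all_boot all_fingroup zify.
Set Implicit Arguments. Unset Strict Implicit. Unset Printing Implicit Defensive.

(* Rotate the Hamiltonian cycle H = w_0 w_1 ... w_(m-1) (m = 2n) so that a given
   edge of G = K_(n,n) - H is w_0 w_k.  Then k is odd, and 3 <= k <= m - 3 since w_0 w_k
   is not a cycle edge and m is even.  Reversing
   the segment w_1 ... w_k is a permutation of the vertices that preserves the
   bipartition (k is odd) and maps H onto the "2-opt" cycle
   H - {w_0 w_1, w_k w_(k+1)} + {w_0 w_k, w_1 w_(k+1)}; hence it maps G onto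
   G - {w_0 w_k, w_1 w_(k+1)} + {w_0 w_1, w_k w_(k+1)}. *)

Section EdgeSets.
Variable T : finType.
Implicit Types (E K H A B : {set {set T}}) (e : {set T}).

Definition swappable_edge E e :=
  exists A B, [/\ A \subset E, B \subset compl_edges E, e \in A, #|A| <= 2
                 & graph_iso E (swap_edges E A B)].

Lemma set2_eq (a b c d : T) : [set a; b] = [set c; d] ->
  (a = c /\ b = d) \/ (a = d /\ b = c).
Proof.
move=> E.
have ha : a \in [set c; d] by rewrite -E set21.
have hb : b \in [set c; d] by rewrite -E set22.
have hc : c \in [set a; b] by rewrite E set21.
have hd : d \in [set a; b] by rewrite E set22.
case/set2P: ha => ?; case/set2P: hb => ?; subst; try by auto.
- by case/set2P: hd => ?; subst; auto.
- by case/set2P: hc => ?; subst; auto.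
Qed.

Lemma imset_set2 (f : T -> T) (a b : T) : f @: [set a; b] = [set f a; f b].
Proof. by rewrite imsetU1 imset_set1. Qed.

Lemma mem_imset_invol (f : {set T} -> {set T}) E e :
  involutive f -> (e \in f @: E) = (f e \in E).
Proof.
move=> fK; apply/imsetP/idP => [[y yE ->]|h]; first by rewrite fK.
by exists (f e); rewrite ?fK.
Qed.

Lemma graph_iso_invol (p : T -> T) (pK : involutive p) E1 E2 :
  (forall e, (p @: e \in E1) = (e \in E2)) -> graph_iso E1 E2.
Proof.
move=> pE12; exists (perm (can_inj pK)).
have pK_set : involutive (fun e : {set T} => p @: e).
  move=> e; rewrite -imset_comp -[RHS]imset_id.
  by apply: eq_imset => x /=; rewrite pK.
have -> : [set perm (can_inj pK) @: f | f : {set T} in E1] = [set p @: f | f : {set T} in E1].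
  by apply: eq_imset => f; apply: eq_imset; exact: permE.
by apply/setP => e; rewrite mem_imset_invol // pE12.
Qed.

Lemma swap_edges_setD K H A B : H \subset K -> A \subset K :\: H -> B \subset H ->
  swap_edges (K :\: H) A B = K :\: (H :\: B :|: A).
Proof.
move=> HK AKH BH; apply/setP => e; rewrite !inE.
case eA: (e \in A).
  have /setDP [_ eNH] := subsetP AKH e eA.
  by rewrite (contraNF (subsetP BH e) eNH) orbT.
case eB: (e \in B); last by rewrite !orbF.
by rewrite orbT (subsetP HK e (subsetP BH e eB)).
Qed.

Lemma subset_compl_edges K H B :
  B \subset H -> (forall e, e \in B -> #|e| = 2) -> B \subset compl_edges (K :\: H).
Proof.
move=> BH B2; apply/subsetP => e eB.
by rewrite inE B2 // inE (subsetP BH e eB).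
Qed.

Definition cycle_edges (s : seq T) : {set {set T}} := [set [set x; next s x] | x in s].

Lemma cycle_edges_rot i s : uniq s -> cycle_edges (rot i s) = cycle_edges s.
Proof.
move=> s_uniq; apply/setP => e.
by apply/imsetP/imsetP => -[x xs ->]; exists x; rewrite ?next_rot ?mem_rot in xs *.
Qed.

Variable side : T -> bool.

Definition bip_edges : {set {set T}} :=
  [set e | [exists x, exists y, (side x != side y) && (e == [set x; y])]].

Lemma bip_edgesP e :
  reflect (exists x y, side x != side y /\ e = [set x; y]) (e \in bip_edges).
Proof.
rewrite inE; apply: (iffP existsP) => [[x /existsP [y /andP [xy /eqP ->]]]|].
  by exists x, y.
by case=> x [y [xy ->]]; exists x; apply/existsP; exists y; rewrite xy eqxx.
Qed.

Lemma side_next_cycle s : cycle_edges s \subset bip_edges ->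
  {in s, forall x, side (next s x) != side x}.
Proof.
move=> sK x xs; have /bip_edgesP [a [b [ab /set2_eq]]] := subsetP sK _ (imset_f _ xs).
by case=> -[-> ->] //; rewrite eq_sym.
Qed.

End EdgeSets.

Definition cyc_succ (m i : nat) := if i.+1 == m then 0 else i.+1.
Definition cyc_adj (m i j : nat) := (j == cyc_succ m i) || (i == cyc_succ m j).
Definition seg_rev (k i : nat) := if (1 <= i) && (i <= k) then k.+1 - i else i.
Definition upair_eq (i j a b : nat) := ((i == a) && (j == b)) || ((i == b) && (j == a)).

Lemma seg_revK k : involutive (seg_rev k).
Proof.
move=> i; rewrite /seg_rev; case: ((1 <= i) && (i <= k)) / idP => ?;
  by repeat case: ifP => ?; lia.
Qed.

Lemma seg_rev_lt m k i : k < m -> i < m -> seg_rev k i < m.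
Proof. by rewrite /seg_rev; case: ifP => ? ? ?; lia. Qed.

Lemma odd_seg_rev k i : odd k -> odd (seg_rev k i) = odd i.
Proof.
by rewrite /seg_rev; case: ifP => // /andP [_ le_ik] odd_k; rewrite oddB ?leqW //= odd_k.
Qed.

Lemma cyc_adj_seg_rev m k i j : i < m -> j < m -> 3 <= k -> k + 3 <= m ->
  cyc_adj m (seg_rev k i) (seg_rev k j) =
  (cyc_adj m i j && ~~ upair_eq i j 0 1 && ~~ upair_eq i j k k.+1)
  || upair_eq i j 0 k || upair_eq i j 1 k.+1.
Proof.
move=> *; rewrite /cyc_adj /cyc_succ /seg_rev /upair_eq.
case: ((1 <= i) && (i <= k)) / idP; case: ((1 <= j) && (j <= k)) / idP => *;
  by repeat (case: ifP => ?); apply/idP/idP; lia.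
Qed.

Lemma nonadjacent_odd_bounds m k : ~~ odd m -> k < m -> odd k -> ~~ cyc_adj m 0 k ->
  3 <= k /\ k + 3 <= m.
Proof.
move=> even_m lt_km odd_k.
have [k_neq0 k_neq2] : k != 0 /\ k != 2 by split; apply: contraTneq odd_k => ->.
have k2_neqm : k.+2 != m by apply: contraNneq even_m => <- /=; rewrite odd_k.
by rewrite /cyc_adj /cyc_succ; do 2 case: ifP => ?; lia.
Qed.

Section TwoOpt.
Variables (T : finType) (side : T -> bool) (u : T) (t : seq T).
Let s := u :: t.
Let m := size s.
Let w i := nth u s i.
Let H := cycle_edges s.
Let K := bip_edges side.
Hypothesis s_uniq : uniq s.
Hypothesis mem_s : forall x, x \in s.
Hypothesis side_next : forall x, side (next s x) != side x.

Lemma w_index x : w (index x s) = x.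
Proof. exact: nth_index. Qed.

Lemma index_lt x : index x s < m.
Proof. by rewrite index_mem. Qed.

Lemma index_w i : i < m -> index (w i) s = i.
Proof. by move=> lt_im; rewrite index_uniq. Qed.

Lemma w_eq i j : i < m -> j < m -> (w i == w j) = (i == j).
Proof. by move=> lt_im lt_jm; rewrite nth_uniq. Qed.

Lemma next_w i : i < m -> next s (w i) = w (cyc_succ m i).
Proof.
move=> lt_im; rewrite next_nth mem_nth // index_w // /cyc_succ.
by case: eqP => [[Ei]|] //=; rewrite nth_default // Ei.
Qed.

Lemma cyc_succ_lt i : i < m -> cyc_succ m i < m.
Proof. by rewrite /cyc_succ; case: eqP => /= ? ?; lia. Qed.

Lemma side_w i : i < m -> side (w i) = side u (+) odd i.
Proof.
elim: i => [|i IH] lt_im; first by rewrite addbF.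
have := side_next (w i); rewrite next_w 1?ltnW // /cyc_succ ifN ?neq_ltn ?lt_im //.
by rewrite IH 1?ltnW //=; case: (side (w i.+1)); case: (side u); case: (odd i).
Qed.

Lemma size_even : ~~ odd m.
Proof.
have lt_last : m.-1 < m by rewrite /m /=.
have := side_next (w m.-1); rewrite next_w // /cyc_succ /m /= eqxx (side_w lt_last).
by rewrite /w /=; case: (side u); case: (odd _).
Qed.

Lemma set2_w_eq a b c d : a < m -> b < m -> c < m -> d < m ->
  ([set w a; w b] == [set w c; w d]) = upair_eq a b c d.
Proof.
move=> ha hb hc hd; apply/eqP/orP => [/set2_eq|].
  by case=> -[/eqP + /eqP]; rewrite !w_eq // => -> ->; [left|right].
by case=> /andP [/eqP -> /eqP ->] //; rewrite setUC.
Qed.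

Lemma cycle_edges_w a b : a < m -> b < m -> ([set w a; w b] \in H) = cyc_adj m a b.
Proof.
move=> ha hb; apply/imsetP/orP => [[x _]|].
  rewrite -(w_index x) next_w ?index_lt // => /eqP.
  rewrite set2_w_eq ?index_lt ?cyc_succ_lt ?index_lt // /upair_eq.
  by case/orP=> /andP [/eqP -> /eqP ->]; [left|right].
by case=> /eqP ->; [exists (w a) | exists (w b); last rewrite setUC];
  rewrite ?mem_s ?next_w.
Qed.

Lemma bip_edges_w a b : a < m -> b < m -> odd a != odd b -> [set w a; w b] \in K.
Proof.
move=> ha hb ab; apply/bip_edgesP; exists (w a), (w b); split=> //.
by rewrite !side_w //; move: ab; case: (side u); case: (odd a); case: (odd b).
Qed.

Lemma index_nonadjacent v : side u != side v -> [set u; v] \notin H ->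
  let k := index v s in [/\ odd k, 3 <= k & k + 3 <= m].
Proof.
move=> uv uvH k; have lt_km : k < m := index_lt v.
have odd_k : odd k.
  by move: uv; rewrite -(w_index v) side_w // /w /=; case: (side u); case: (odd k).
have nadj : ~~ cyc_adj m 0 k by rewrite -cycle_edges_w // w_index.
by have [] := nonadjacent_odd_bounds size_even lt_km odd_k nadj.
Qed.

Section SegmentReversal.
Variable k : nat.
Hypotheses (odd_k : odd k) (k_ge3 : 3 <= k) (k_le : k + 3 <= m).

Let lt_km : k < m. Proof. lia. Qed.

Let rv x := w (seg_rev k (index x s)).

Lemma rv_w i : i < m -> rv (w i) = w (seg_rev k i).
Proof. by move=> lt_im; rewrite /rv index_w. Qed.

Lemma rvK : involutive rv.
Proof.
by move=> x; rewrite -{2}(w_index x) /rv index_w ?seg_rev_lt ?index_lt // seg_revK.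
Qed.

Lemma side_rv x : side (rv x) = side x.
Proof.
by rewrite -{2}(w_index x) /rv !side_w ?seg_rev_lt ?index_lt // odd_seg_rev.
Qed.

Lemma bip_edges_rv (e : {set T}) : (rv @: e \in K) = (e \in K).
Proof.
suff K_rv f : f \in K -> rv @: f \in K.
  apply/idP/idP => [/K_rv|/K_rv] //.
  by rewrite -imset_comp (eq_imset _ rvK) imset_id.
by case/bip_edgesP => x [y [xy ->]]; apply/bip_edgesP; exists (rv x), (rv y);
  rewrite imset_set2 !side_rv.
Qed.

Definition two_opt_removed := [set [set w 0; w 1]; [set w k; w k.+1]].
Definition two_opt_added := [set [set w 0; w k]; [set w 1; w k.+1]].

Lemma cycle_edges_rv (e : {set T}) : e \in K ->
  (rv @: e \in H) = (e \in H :\: two_opt_removed :|: two_opt_added).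
Proof.
case/bip_edgesP => x [y [_ ->]]; rewrite -(w_index x) -(w_index y).
have [lt_xm lt_ym] := (index_lt x, index_lt y).
have [lt_1m lt_k1m] : 1 < m /\ k.+1 < m by split; lia.
rewrite imset_set2 !rv_w // !inE !set2_w_eq // !cycle_edges_w ?seg_rev_lt //.
rewrite cyc_adj_seg_rev //.
by case: cyc_adj; case: upair_eq; case: upair_eq; case: upair_eq; case: upair_eq.
Qed.

Lemma swappable_head : swappable_edge (K :\: H) [set w 0; w k].
Proof.
have [lt_1m lt_k1m] : 1 < m /\ k.+1 < m by split; lia.
have [adj_01 adj_kk1] : cyc_adj m 0 1 /\ cyc_adj m k k.+1.
  by rewrite /cyc_adj /cyc_succ; split; case: ifP => ? /=; lia.
have [nadj_0k nadj_1k1] : ~~ cyc_adj m 0 k /\ ~~ cyc_adj m 1 k.+1.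
  by rewrite /cyc_adj /cyc_succ; split; repeat case: ifP => ?; lia.
have HK : H \subset K.
  apply/subsetP => e /imsetP [x _ ->]; apply/bip_edgesP; exists x, (next s x).
  by rewrite eq_sym side_next.
have addedKH : two_opt_added \subset K :\: H.
  apply/subsetP => e; rewrite in_set2 => /orP [] /eqP ->;
  by rewrite in_setD cycle_edges_w ?(negbTE nadj_0k) ?(negbTE nadj_1k1) ?bip_edges_w //= ?odd_k.
have removedH : two_opt_removed \subset H.
  by apply/subsetP => e; rewrite in_set2 => /orP [] /eqP ->; rewrite cycle_edges_w.
exists two_opt_added, two_opt_removed; split => //.
- apply: subset_compl_edges => // e; rewrite !inE => /orP [] /eqP ->;
  by rewrite cards2 w_eq //; case: eqP => //; lia.
- by rewrite !inE eqxx.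
- by rewrite cards2; case: (_ != _).
rewrite swap_edges_setD //; apply: (graph_iso_invol rvK) => e.
by rewrite !in_setD bip_edges_rv; case eK: (e \in K); rewrite ?andbF // cycle_edges_rv.
Qed.

End SegmentReversal.

Lemma swappable_from_head v : side u != side v -> [set u; v] \notin H ->
  swappable_edge (K :\: H) [set u; v].
Proof.
move=> uv uvH; have [odd_k k_ge3 k_le] := index_nonadjacent uv uvH.
by have := swappable_head odd_k k_ge3 k_le; rewrite w_index.
Qed.

End TwoOpt.

Definition Knn_side n (x : Knn_vertex n) : bool := if x is inl _ then true else false.

Lemma Knn_bip_edges n : Knn n = bip_edges (@Knn_side n).
Proof.
apply/setP => e; apply/imset2P/bip_edgesP => [[i j _ _ ->]|[x [y [xy ->]]]].
  by exists (inl i), (inr j).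
case: x y xy => [i|i] [j|j] //= _; first by exists i j.
by exists j i => //; rewrite setUC.
Qed.

Theorem mainTheorem6 (n : nat) (H : {set {set Knn_vertex n}}) :
  4 <= n -> hamiltonian_cycle (Knn n) H ->
  two_swappable (Knn n :\: H).
Proof.
move=> _ [s [s_uniq mem_s _ -> HK]] e; rewrite Knn_bip_edges -/(cycle_edges s) in HK *.
case/setDP => /bip_edgesP [x [y [xy ->]]] xyH.
have [i t rot_s] := rot_to (mem_s x).
rewrite -(cycle_edges_rot i s_uniq) rot_s in HK xyH *.
apply: swappable_from_head => //.
- by rewrite -rot_s rot_uniq.
- by move=> z; rewrite -rot_s mem_rot.
- by move=> z; apply: side_next_cycle; rewrite // -rot_s mem_rot.
Qed.
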